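(* Let $r\in\{0,\ldots,N\}$ and suppose $\xi_r(\varpi^N)<1/2$. Then for all $A,A'\in\mathbb{R}^{n\times s}$, $$\|\phi(A')-\phi(A)\|_1\le \frac{1}{1-2\xi_r(\varpi^N)}\Big(\mathcal{J}(A')-\mathcal{J}(A)+2\delta_r(A)\Big).$$
   Context: Data: integers $n,s,N\ge1$ and a dataset $\varpi^N=((x_1,y_1),\ldots,(x_N,y_N))$ with $x_t\in\mathbb{R}^n$, $y_t\in\mathbb{R}$. Let $\mathbb{T}=\{1,\ldots,N\}$, $\mathbb{S}=\{1,\ldots,s\}$. For $A=[a_1\ \cdots\ a_s]\in\mathbb{R}^{n\times s}$, $\sigma_A:\mathbb{T}\to\mathbb{S}$ is a switching signal satisfying $\sigma_A(t)\in\arg\min_{i\in\mathbb{S}}|y_t-x_t^\top a_i|$ for all $t$, selected uniquely by a fixed rule depending only on $A$ and the data (among all admissible choices, one maximizing $\min_{i}|I_i(A)|$, ties then broken by assigning the smallest admissible index). $I_i(A)=\{t\in\mathbb{T}:\sigma_A(t)=i\}$. Define $\phi(A)=\big(y_1-x_1^\top a_{\sigma_A(1)},\ldots,y_N-x_N^\top a_{\sigma_A(N)}\big)^\top\in\mathbb{R}^N$ and $\mathcal{J}(A)=\|\phi(A)\|_1=\sum_{t=1}^N\min_{i\in\mathbb{S}}|y_t-a_i^\top x_t|$. For $\mathcal{T}\subset\mathbb{T}$, $\phi_{\mathcal{T}}(A)$ is the subvector of $\phi(A)$ indexed by $\mathcal{T}$. $\mathcal{S}_r=\{w\in\mathbb{R}^N:\|w\|_0\le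 r\}$ ($\|w\|_0$ = number of nonzero entries), and $\delta_r(A)=\inf_{w\in\mathcal{S}_r}\|\phi(A)-w\|_1$, i.e. the sum of the $N-r$ smallest absolute values of entries of $\phi(A)$. The $r$-th concentration ratio is $$\xi_r(\varpi^N)=\sup\Big\{\frac{\|\phi_{\mathcal{T}}(A)-\phi_{\mathcal{T}}(A')\|_1}{\|\phi(A)-\phi(A')\|_1}: A,A'\in\mathbb{R}^{n\times s},\ \mathcal{T}\subset\mathbb{T},\ \phi(A)\ne\phi(A'),\ |\mathcal{T}|\le r\Big\}.$$ *)

From HB Require Import structures.
From mathcomp Require Import all_boot all_order all_algebra.
From mathcomp Require Import boolp classical_sets reals.
Set Implicit Arguments. Unset Strict Implicit. Unset Printing Implicit Defensive.
Import Order.TTheory GRing.Theory Num.Theory.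
Local Open Scope ring_scope.
Local Open Scope classical_set_scope.

Section Defs.
Variables (R : realType) (n s N : nat).
(* dataset: x t is the regressor x_t in R^n (column vector), y t in R *)
Variables (x : 'I_N -> 'cV[R]_n) (y : 'I_N -> R).

(* residual y_t - x_t^T a_i, where a_i is the i-th column of A *)
Definition resid (A : 'M[R]_(n, s)) (t : 'I_N) (i : 'I_s) : R :=
  y t - \sum_(k < n) x t k 0 * A k i.

Definition admissible (A : 'M[R]_(n, s)) (sg : {ffun 'I_N -> 'I_s}) : bool :=
  [forall t, forall i, `|resid A t (sg t)| <= `|resid A t i|].

Definition min_mode_size (sg : {ffun 'I_N -> 'I_s}) : nat :=
  \big[minn/N]_(i < s) #|[set t | sg t == i]|.

(* lexicographic rank of (sg(1),...,sg(N)) : base-s number with sg(1) most significant *)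
Definition lexrank (sg : {ffun 'I_N -> 'I_s}) : nat :=
  (\sum_(t < N) (sg t : nat) * s ^ (N - 1 - t))%N.

Definition selected (A : 'M[R]_(n, s)) (sg : {ffun 'I_N -> 'I_s}) : bool :=
  [&& admissible A sg,
      [forall tau, admissible A tau ==> (min_mode_size tau <= min_mode_size sg)%N] &
      [forall tau, (admissible A tau && (min_mode_size tau == min_mode_size sg))
                     ==> (lexrank sg <= lexrank tau)%N]].

Definition sigmaA (A : 'M[R]_(n, s)) : option {ffun 'I_N -> 'I_s} :=
  [pick sg | selected A sg].

Definition phi (A : 'M[R]_(n, s)) (t : 'I_N) : R :=
  match sigmaA A with Some sg => resid A t (sg t) | None => 0 end.

Definition norm1 (w : 'I_N -> R) : R := \sum_(t < N) `|w t|.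

Definition norm0 (w : 'I_N -> R) : nat := #|[set t | w t != 0]|.

Definition JA (A : 'M[R]_(n, s)) : R := norm1 (phi A).

Definition delta (r : nat) (A : 'M[R]_(n, s)) : R :=
  inf [set norm1 (fun t => phi A t - w t) | w in [set w : 'I_N -> R | (norm0 w <= r)%N]].

Definition xi (r : nat) : R :=
  sup [set v : R | exists (A A' : 'M[R]_(n, s)) (T : {set 'I_N}),
         phi A <> phi A' /\ (#|T| <= r)%N /\
         v = (\sum_(t in T) `|phi A t - phi A' t|) / norm1 (fun t => phi A t - phi A' t)].
End Defs.

From HB Require Import structures.
From mathcomp Require Import all_boot all_order all_algebra.
From mathcomp Require Import boolp classical_sets reals.
From mathcomp Require Import lra.
Set Implicit Arguments. Unset Strict Implicit.
Import Order.TTheory GRing.Theory Num.Theory.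
Local Open Scope ring_scope.

(* The argument separates a purely metric fact from the data-specific part.
   - [pointwise_split]: for reals a, b, w,
       |a| + |b - a| <= |b| + 2|a - w| + 2[w <> 0]|b - a|.
   - [sparse_comparison]: summing it over t, for vectors a, b and any w whose
     support T carries at most a fraction X of the l1-mass of b - a,
       (1 - 2X) ||b - a||_1 <= ||b||_1 - ||a||_1 + 2 ||a - w||_1.
   - [xi_concentration]: by definition of xi_r as a supremum of (bounded)
     ratios, every set T of size <= r carries at most xi_r of the mass of
     phi(A') - phi(A); in particular the support of any r-sparse w does.
   - [le_delta]: a lower bound on ||phi(A) - w||_1 over all r-sparse w is a
     lower bound on the infimum delta_r(A).
   The theorem follows by applying these with a = phi(A), b = phi(A'). *)

Lemma sum_in_le_norm1 (R : realType) (N : nat) (T : {set 'I_N}) (u : 'I_N -> R) :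
  \sum_(t in T) `|u t| <= norm1 u.
Proof.
by rewrite /norm1 [X in _ <= X](bigID (mem T)) /= lerDl sumr_ge0.
Qed.

Lemma norm1_ge0 (R : realType) (N : nat) (u : 'I_N -> R) : 0 <= norm1 u.
Proof. by rewrite /norm1 sumr_ge0. Qed.

(* norm0 counts the support of w, written there as a classical set; the
   finite set of the same elements has the same cardinality. *)
Lemma card_support (R : realType) (N : nat) (w : 'I_N -> R) :
  #|[set t | w t != 0]| = norm0 w.
Proof.
apply: eq_card => t; rewrite inE.
by apply/idP/idP => [w_t | /set_mem //]; apply: mem_set.
Qed.

(* Coordinatewise inequality: off the support of w (so |a - w| = |a|) it is
   the triangle inequality |b - a| <= |b| + |a|; on the support it is the
   triangle inequality |a| <= |b| + |b - a| using the extra budget 2|b - a|. *)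
Lemma pointwise_split (R : realDomainType) (a b w : R) :
  `|a| + `|b - a| <= `|b| + 2 * `|a - w| + (if w == 0 then 0 else 2 * `|b - a|).
Proof.
have tri_a : `|a| <= `|b| + `|b - a|.
  by have := ler_distD b a 0; rewrite !subr0 distrC addrC.
have tri_d : `|b - a| <= `|b| + `|a| by apply: ler_normB.
have := normr_ge0 (a - w); have := normr_ge0 (b - a).
by case: eqP => [-> | _]; rewrite ?subr0; lra.
Qed.

Lemma sparse_comparison (R : realType) (N : nat) (a b w : 'I_N -> R) (X : R) :
  \sum_(t in [set t | w t != 0]) `|b t - a t| <= X * norm1 (fun t => b t - a t) ->
  (1 - 2 * X) * norm1 (fun t => b t - a t)
    <= norm1 b - norm1 a + 2 * norm1 (fun t => a t - w t).
Proof.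
set T := [set t | w t != 0] => concT.
have summed : \sum_(t < N) (`|a t| + `|b t - a t|)
    <= \sum_(t < N) (`|b t| + 2 * `|a t - w t|
                     + (if w t == 0 then 0 else 2 * `|b t - a t|)).
  by apply: ler_sum => t _; apply: pointwise_split.
have onT : \sum_(t < N) (if w t == 0 then 0 else 2 * `|b t - a t|)
    = 2 * \sum_(t in T) `|b t - a t|.
  rewrite mulr_sumr [RHS]big_mkcond /=; apply: eq_bigr => t _.
  by rewrite inE; case: eqP.
move: summed; rewrite !big_split /= onT -mulr_sumr -/(norm1 _) => summed.
rewrite /norm1 in summed concT *; lra.
Qed.

(* Each ratio in the definition of xi lies in [0, 1], so the supremum bounds
   the mass of phi(A) - phi(A') carried by any set of at most r samples. *)
Lemma xi_concentration (R : realType) (n s N : nat) (x : 'I_N -> 'cV[R]_n)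
    (y : 'I_N -> R) (r : nat) (A A' : 'M[R]_(n, s)) (T : {set 'I_N}) :
  (#|T| <= r)%N ->
  \sum_(t in T) `|phi x y A t - phi x y A' t|
    <= xi s x y r * norm1 (fun t => phi x y A t - phi x y A' t).
Proof.
move=> cardT; set d := fun t => phi x y A t - phi x y A' t.
have [d0 | dn0] := eqVneq (norm1 d) 0.
  by have := sum_in_le_norm1 T d; rewrite d0 mulr0.
have dpos : 0 < norm1 d by rewrite lt_def dn0 norm1_ge0.
rewrite -ler_pdivrMr //; apply: ub_le_sup.
  exists 1 => v [B [B' [T' [_ [_ ->]]]]].
  set e := norm1 _; have [-> | en0] := eqVneq e 0; first by rewrite invr0 mulr0.
  by rewrite ler_pdivrMr ?lt_def ?en0 ?norm1_ge0 // mul1r sum_in_le_norm1.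
exists A, A', T; split=> //.
move=> eqAA'; move: dn0; rewrite /norm1 /d eqAA'.
by under eq_bigr do rewrite subrr normr0; rewrite big1 ?eqxx.
Qed.

(* delta_r(A) is an infimum over a nonempty set (w = 0 is r-sparse), so any
   common lower bound of its elements lies below it. *)
Lemma le_delta (R : realType) (n s N : nat) (x : 'I_N -> 'cV[R]_n)
    (y : 'I_N -> R) (r : nat) (A : 'M[R]_(n, s)) (c : R) :
  (forall w : 'I_N -> R, (norm0 w <= r)%N -> c <= norm1 (fun t => phi x y A t - w t)) ->
  c <= delta x y r A.
Proof.
move=> lb; apply: lb_le_inf.
  exists (norm1 (fun t => phi x y A t - 0)), (fun _ => 0) => //=.
  by rewrite /norm0 eq_card0 // => t; apply/negP => /set_mem; rewrite /= eqxx.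
by move=> _ [w sparse_w <-]; apply: lb.
Qed.

Theorem lemma2 (R : realType) (n s N : nat) (x : 'I_N -> 'cV[R]_n) (y : 'I_N -> R)
  (hn : (0 < n)%N) (hs : (0 < s)%N) (hN : (0 < N)%N)
  (r : nat) (hr : (r <= N)%N)
  (hxi : xi s x y r < 1 / 2) :
  forall A A' : 'M[R]_(n, s),
    norm1 (fun t => phi x y A' t - phi x y A t)
    <= (1 - 2 * xi s x y r)^-1 * (JA x y A' - JA x y A + 2 * delta x y r A).
Proof.
move=> A A'; set X := xi s x y r.
have gap : 0 < 1 - 2 * X.
  by move: hxi; rewrite -/X ltr_pdivlMr // => twoX_lt1; lra.
have bound_w : forall w : 'I_N -> R, (norm0 w <= r)%N ->
    ((1 - 2 * X) * norm1 (fun t => phi x y A' t - phi x y A t)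
      - (JA x y A' - JA x y A)) / 2 <= norm1 (fun t => phi x y A t - w t).
  move=> w sparse_w; rewrite ler_pdivrMr // lerBlDl [norm1 _ * 2]mulrC.
  by apply: sparse_comparison; apply: xi_concentration; rewrite card_support.
have := le_delta bound_w; rewrite ler_pdivrMr // => lb.
by rewrite ler_pdivlMl //; lra.
Qed.
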